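(* Let $\mathcal G$ be an étale groupoid and $(Y,\Delta)$ a proper $\mathcal G$-simplicial complex satisfying hypotheses $(H_1)$ and $(H_2)$. Then the action of $\mathcal G$ on $|\Delta|$ is proper.
   Context: Étale groupoids are locally compact Hausdorff with range map a local homeomorphism. A $\mathcal G$-simplicial complex is a pair $(Y,\Delta)$ where $Y$ is a locally compact Hausdorff left $\mathcal G$-space whose anchor map $\rho:Y\to\mathcal G^{(0)}$ is a local homeomorphism and $\Delta$ is a family of finite nonempty subsets of $Y$ of bounded cardinality, each inside a fibre of $\rho$, closed under nonempty subsets and under $\delta\mapsto\gamma\delta$. It is proper if the $\mathcal G$-action on $Y$ is proper (i.e. $\mathcal G\ltimes Y$ is a proper groupoid). $|\Delta|=\{\mu\in P(Y):\mathrm{supp}(\mu)\in\Delta\}$, where $P(Y)$ is the space of positive Radon probability measures supported in a single fibre of $\rho$, with weak-$*$ topology from $C_c(Y,\mathbb R)$ and $\mathcal G$ acting by pushforward. $(H_1)$: for every compact $K\subseteq Y$, $\{y:\exists y'\in K,\{y,y'\}\in\Delta\}$ is compact. $(H_2)$: if nets $(y^{(i)}_\lambda)_\lambda$ converge to $y^{(i)}$ ($0\le i\le k$) and $\{y^{(0)}_\lambda,\dots,y^{(k)}_\lambda\}\in\Delta$ for all $\lambda$, then $\{y^{(0)},\dots,y^{(k)}\}\in\Delta$. *)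

From mathcomp Require Import all_boot all_algebra all_classical all_reals all_analysis.
Import numFieldNormedType.Exports.
Set Implicit Arguments.
Unset Strict Implicit.
Unset Printing Implicit Defensive.
Local Open Scope classical_set_scope.
Local Open Scope ring_scope.

Definition local_homeo {X T : topologicalType} (f : X -> T) (B : set T) : Prop :=
  continuous f /\ (forall x, B (f x)) /\
  forall x : X, exists U : set X, open U /\ U x /\
    (forall a b, U a -> U b -> f a = f b -> a = b) /\
    (forall W, open W -> W `<=` U -> exists V, open V /\ f @` W = V `&` B).

(* Topological groupoid G with unit space G0 (a subset of G), range r,
   source s, multiplication mul (meaningful on pairs with s g = r h) and
   inverse inv. *)
Definition topological_groupoid {G : topologicalType} (G0 : set G)
    (r s : G -> G) (mul : G -> G -> G) (inv : G -> G) : Prop :=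
  (forall g, G0 (r g) /\ G0 (s g)) /\
  (forall u, G0 u -> r u = u /\ s u = u) /\
  (forall g h, s g = r h -> r (mul g h) = r g /\ s (mul g h) = s h) /\
  (forall g h k, s g = r h -> s h = r k -> mul (mul g h) k = mul g (mul h k)) /\
  (forall g, mul (r g) g = g /\ mul g (s g) = g) /\
  (forall g, r (inv g) = s g /\ s (inv g) = r g /\
             mul g (inv g) = r g /\ mul (inv g) g = s g) /\
  continuous r /\ continuous s /\ continuous inv /\
  {within [set p : G * G | s p.1 = r p.2], continuous (fun p => mul p.1 p.2)}.

Definition etale_groupoid {G : topologicalType} (G0 : set G)
    (r s : G -> G) (mul : G -> G -> G) (inv : G -> G) : Prop :=
  topological_groupoid G0 r s mul inv /\ hausdorff_space G /\
  locally_compact [set: G] /\ local_homeo r G0.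

(* Locally compact Hausdorff left G-space Y with anchor map rho : Y -> G0
   a local homeomorphism; act g y is meaningful when s g = rho y. *)
Definition etale_G_space {G Y : topologicalType} (G0 : set G) (r s : G -> G)
    (mul : G -> G -> G) (rho : Y -> G) (act : G -> Y -> Y) : Prop :=
  hausdorff_space Y /\ locally_compact [set: Y] /\ local_homeo rho G0 /\
  (forall g y, s g = rho y -> rho (act g y) = r g) /\
  (forall g h y, s g = r h -> s h = rho y -> act (mul g h) y = act g (act h y)) /\
  (forall y, act (rho y) y = y) /\
  {within [set p : G * Y | s p.1 = rho p.2], continuous (fun p => act p.1 p.2)}.

(* Properness of an action on the set D of points of the space X (with the
   subspace topology), where comp g x says that (g,x) is composable:
   the groupoid D x| G is proper, i.e. the map (g,x) |-> (g x, x) from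
   the composable pairs to D x D is proper (inverse images of compact sets
   are compact). Compactness in a subspace = compactness in the ambient
   space. *)
Definition proper_action_on {G X : topologicalType} (D : set X)
    (comp : G -> X -> Prop) (act : G -> X -> X) : Prop :=
  forall K : set (X * X), K `<=` D `*` D -> compact K ->
    compact [set p : G * X | D p.2 /\ comp p.1 p.2 /\ K (act p.1 p.2, p.2)].

Definition G_simplicial_complex {G Y : topologicalType} (s : G -> G)
    (rho : Y -> G) (act : G -> Y -> Y) (Delta : set (set Y)) : Prop :=
  (exists N : nat, forall d, Delta d ->
     exists l : seq Y, (size l <= N)%N /\ d = [set y | y \in l]) /\
  (forall d, Delta d -> d !=set0) /\
  (forall d, Delta d -> forall y y', d y -> d y' -> rho y = rho y') /\
  (forall d d', Delta d -> d' `<=` d -> d' !=set0 -> Delta d') /\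
  (forall g d, Delta d -> (forall y, d y -> s g = rho y) -> Delta (act g @` d)).

Definition H1 {Y : topologicalType} (Delta : set (set Y)) : Prop :=
  forall K : set Y, compact K ->
    compact [set y | exists2 y', K y' & Delta [set y; y']].

Definition directed {I : Type} (le : I -> I -> Prop) : Prop :=
  (exists i : I, True) /\ (forall i, le i i) /\
  (forall i j k, le i j -> le j k -> le i k) /\
  (forall i j, exists k, le i k /\ le j k).

Definition net_cvg {I : Type} (le : I -> I -> Prop) {Y : topologicalType}
    (x : I -> Y) (y : Y) : Prop :=
  forall U, nbhs y U -> exists i0, forall i, le i0 i -> U (x i).

Definition H2 {Y : topologicalType} (Delta : set (set Y)) : Prop :=
  forall (I : Type) (le : I -> I -> Prop), directed le ->
  forall (k : nat) (x : 'I_k.+1 -> I -> Y) (y : 'I_k.+1 -> Y),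
    (forall i, net_cvg le (x i) (y i)) ->
    (forall l, Delta [set x i l | i in [set: 'I_k.+1]]) ->
    Delta [set y i | i in [set: 'I_k.+1]].

(* Finitely supported positive measures mu = sum_y w y * delta_y on Y,
   encoded by their weight function w. *)
Definition supp {Y : topologicalType} {R : realType} (w : Y -> R) : set Y :=
  [set y | w y != 0].

Definition Cc (R : realType) (Y : topologicalType) :=
  {f : Y -> R | continuous f /\ compact (closure [set y | f y != 0])}.

Definition integ {Y : topologicalType} {R : realType} (w : Y -> R) (f : Y -> R) : R :=
  \sum_(y \in supp w) w y * f y.

Definition meas_emb (R : realType) (Y : topologicalType) (w : Y -> R)
  : {ptws Cc R Y -> R} := fun f => integ w (sval f).

(* Space of (finitely supported) measures with the weak-* topology induced
   by C_c(Y, R). *)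
Notation Meas R Y := (initial_topology (@meas_emb R Y)).

Definition realization (R : realType) {Y : topologicalType}
    (Delta : set (set Y)) : set (Meas R Y) :=
  fun w : Y -> R => (forall y, 0 <= w y) /\ Delta (supp w) /\
                    \sum_(y \in supp w) w y = 1.

Definition push {G : Type} {Y : topologicalType} {R : realType}
    (act : G -> Y -> Y) (g : G) (w : Meas R Y) : Meas R Y :=
  fun y' : Y => \sum_(y \in [set y | w y != 0 /\ act g y = y']) w y.

Definition meas_comp {G Y : topologicalType} {R : realType} (s : G -> G)
    (rho : Y -> G) (g : G) (w : Meas R Y) : Prop :=
  forall y, supp w y -> s g = rho y.

From mathcomp Require Import all_boot all_order all_algebra.
From mathcomp Require Import all_classical all_reals all_analysis.
Import numFieldNormedType.Exports.

(* Let U be an ultrafilter on the composable pairs (g, mu) with (g mu, mu) in a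
   compact K, so that (g mu, mu) converges along U to some (nu, mu) in K.  A
   bump function at a point of supp mu eventually has positive integral against
   the measures of U, so their supports eventually meet a fixed compact set;
   since any two points of a support span a simplex, (H1) then traps these
   supports, and likewise those of the g mu, in compact sets C1 and C2.
   Properness of the action on Y keeps g eventually in the compact projection of
   {(g, y) | (g y, y) in C2 x C1}, which provides a limit g0.  Writing every
   measure as N weighted atoms, atoms and weights converge along U, and since
   finitely supported measures are determined by their integrals against
   C_c(Y), mu is the atomic measure of the limit atoms and nu = g0 mu. *)

Set Implicit Arguments.
Unset Strict Implicit.
Unset Printing Implicit Defensive.
Import Order.TTheory GRing.Theory Num.Theory.
Local Open Scope classical_set_scope.
Local Open Scope ring_scope.

Lemma finite_set_cover (T : eqType) (A : set T) : finite_set A ->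
  exists2 l : seq T, uniq l & A `<=` [set` l].
Proof.
case/finite_seqP => l ->; exists (undup l); first exact: undup_uniq.
by move=> y /=; rewrite mem_undup.
Qed.

Section FiniteMeasures.

Variables (R : realType) (Y : topologicalType).
Implicit Types (w h : Y -> R) (l : seq Y).

Lemma nsupp_eq0 w y : ~ supp w y -> w y = 0.
Proof. by move=> ny; apply/eqP; apply: contra_notT ny. Qed.

Lemma integ_seq l w h : uniq l -> supp w `<=` [set` l] ->
  integ w h = \sum_(y <- l) w y * h y.
Proof.
move=> ul sl; rewrite /integ (fsbig_fwiden l) // => y [_ ny].
by rewrite /= (nsupp_eq0 ny) mul0r.
Qed.

Lemma integ_neq0_supp w h : integ w h != 0 -> exists2 y, supp w y & h y != 0.
Proof.
apply: contraNP => nex; rewrite /integ fsbig1 // => y sy.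
suff -> : h y = 0 by rewrite mulr0.
by apply/eqP; apply: contra_notT nex => hy; exists y.
Qed.

Lemma integ_gt0 w h y : finite_set (supp w) ->
  (forall x, 0 <= w x) -> (forall x, 0 <= h x) -> supp w y -> 0 < h y ->
  0 < integ w h.
Proof.
move=> /finite_set_cover [l ul sl] w0 h0 wy hy.
rewrite (integ_seq _ ul sl) (bigD1_seq y) //=; last exact: sl.
apply: ltr_pwDl; first by rewrite mulr_gt0 // lt0r wy w0.
by rewrite sumr_ge0 // => x _; rewrite mulr_ge0.
Qed.

Lemma prob_weight_le1 w y : (forall x, 0 <= w x) -> finite_set (supp w) ->
  \sum_(x \in supp w) w x = 1 -> w y <= 1.
Proof.
move=> w0 /finite_set_cover [l ul sl] <-.
have [wy|wy] := eqVneq (w y) 0; first by rewrite wy sumr_ge0.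
rewrite (fsbig_fwiden l) //; last by move=> x [_ /nsupp_eq0].
by rewrite (bigD1_seq y) //= ?lerDl ?sumr_ge0 //; exact: sl.
Qed.

Section Pushforward.
Variables (G : Type) (act : G -> Y -> Y) (g : G).

Lemma supp_push w : supp (push act g w) `<=` act g @` supp w.
Proof.
move=> y'; apply: contraPP => nim; apply/negP/negPn/eqP.
rewrite /push fsbig1 //.
by move=> y [wy gy]; case: nim; exists y.
Qed.

Lemma push_seq l w y' : uniq l -> supp w `<=` [set` l] ->
  push act g w y' = \sum_(y <- l | act g y == y') w y.
Proof.
move=> ul sl; rewrite /push.
have -> : [set y | w y != 0 /\ act g y = y'] = supp w `&` [set y | act g y = y'] by [].
rewrite fsbig_mkcondr (fsbig_fwiden l) //; last first.
  by move=> y [_ ny] /=; case: ifP => // _; rewrite (nsupp_eq0 ny).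
rewrite [RHS]big_mkcond; apply: eq_bigr => y _.
by case: ifPn => [/set_mem /= ->|/negP hn]; [rewrite eqxx | case: eqP => // /mem_set].
Qed.

Lemma integ_push w h : finite_set (supp w) ->
  integ (push act g w) h = integ w (h \o act g).
Proof.
move=> /finite_set_cover [l ul sl]; set r := undup (map (act g) l).
have sr : supp (push act g w) `<=` [set` r].
  by move=> _ /supp_push [y /sl yl <-]; rewrite /= mem_undup map_f.
rewrite (integ_seq _ (undup_uniq _) sr) (integ_seq _ ul sl).
under eq_bigr do rewrite (push_seq _ ul sl) big_distrl /= big_mkcond /=.
rewrite (exchange_big _ r l xpredT xpredT); apply: eq_big_seq => y yl.
rewrite (bigD1_seq (act g y)) ?undup_uniq ?mem_undup ?map_f //= eqxx big1 ?addr0 //.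
by move=> y' /negbTE; rewrite eq_sym => ->.
Qed.

Lemma supp_push_act w y : finite_set (supp w) -> (forall x, 0 <= w x) ->
  supp w y -> supp (push act g w) (act g y).
Proof.
move=> /finite_set_cover [l ul sl] w0 wy.
rewrite /supp /= (push_seq _ ul sl) big_mkcond (bigD1_seq y) //= ?eqxx; last exact: sl.
apply: lt0r_neq0; apply: ltr_pwDl; first by rewrite lt0r wy w0.
by rewrite sumr_ge0 // => x _; case: ifP.
Qed.

End Pushforward.

Section DiracSum.
Variables (I : finType) (z : I -> Y) (al : I -> R).

Definition dirac_sum : Y -> R := fun y => \sum_(i | z i == y) al i.

Lemma supp_dirac_sum : supp dirac_sum `<=` range z.
Proof.
move=> y; apply: contraPP => nz; apply/negP/negPn/eqP; rewrite /dirac_sum big_pred0 //.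
by move=> i; apply/eqP => ziy; apply: nz; exists i.
Qed.

Lemma finite_supp_dirac_sum : finite_set (supp dirac_sum).
Proof. exact: sub_finite_set supp_dirac_sum (finite_image _ _). Qed.

Lemma sum_dirac_sum_seq l (F : Y -> R) : uniq l -> range z `<=` [set` l] ->
  \sum_(y <- l) dirac_sum y * F y = \sum_i al i * F (z i).
Proof.
move=> ul zl; under eq_bigr do rewrite big_distrl /= big_mkcond /=.
rewrite exchange_big /=; apply: eq_bigr => i _.
rewrite (bigD1_seq (z i)) //= ?eqxx ?big1 ?addr0 //; last by apply: zl; exists i.
by move=> y /negbTE; rewrite eq_sym => ->.
Qed.

Lemma range_sub_codom : range z `<=` [set` undup (codom z)].
Proof. by move=> _ [i _ <-]; rewrite /= mem_undup codom_f. Qed.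

Lemma integ_dirac_sum h : integ dirac_sum h = \sum_i al i * h (z i).
Proof.
rewrite (integ_seq _ (undup_uniq _) (subset_trans supp_dirac_sum range_sub_codom)).
exact: sum_dirac_sum_seq (undup_uniq _) range_sub_codom.
Qed.

End DiracSum.

Lemma push_dirac_sum (I : finType) (z : I -> Y) (al : I -> R)
    (G : Type) (act : G -> Y -> Y) (g : G) :
  push act g (dirac_sum z al) = dirac_sum (act g \o z) al.
Proof.
have zl := @range_sub_codom _ z.
apply/funext => y'.
rewrite (push_seq _ _ _ (undup_uniq _) (subset_trans (@supp_dirac_sum _ z al) zl)).
rewrite big_mkcond /=; under eq_bigr do rewrite -mulrb -mulr_natr.
rewrite (sum_dirac_sum_seq al _ (undup_uniq _) zl) /dirac_sum /=.
by rewrite [RHS]big_mkcond; apply: eq_bigr => i _; rewrite mulr_natr mulrb.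
Qed.

End FiniteMeasures.

Lemma near_eq_cvg_unique (T : Type) (F : set_system T) (X : topologicalType)
    (f g : T -> X) (a b : X) :
  ProperFilter F -> hausdorff_space X ->
  f @ F --> a -> g @ F --> b -> (\forall t \near F, f t = g t) -> a = b.
Proof.
move=> PF hX fa gb fg; apply: (cvg_unique hX (F := g @ F)) gb.
exact: cvg_trans (near_eq_cvg fg) fa.
Qed.

Lemma cvg_fst_snd (X Z : topologicalType) (F : set_system (X * Z)) (x : X) (z : Z) :
  Filter F -> (fun p => p.1) @ F --> x -> (fun p => p.2) @ F --> z -> F --> (x, z).
Proof.
by move=> FF Fx Fz A /(cvg_pair Fx Fz) FA; apply: (@filterS _ F FF _ _ _ FA) => -[].
Qed.

Lemma cvg_within_comp (T : Type) (F : set_system T) (X Z : topologicalType)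
    (A : set X) (f : X -> Z) (m : T -> X) (x : X) :
  Filter F -> {within A, continuous f} -> A x -> m @ F --> x ->
  (\forall t \near F, A (m t)) -> (f \o m) @ F --> f x.
Proof.
move=> FF /subspace_continuousP fc Ax mx FA; apply: cvg_trans (fc x Ax).
move=> B /mx Fm; apply: filterS (filterI FA Fm) => t [Amt Bmt]; exact: Bmt.
Qed.

Lemma ultra_compact_cvg (T : Type) (F : set_system T) (X : topologicalType)
    (f : T -> X) (A : set X) :
  UltraFilter F -> compact A -> (\forall t \near F, A (f t)) ->
  exists2 x, A x & f @ F --> x.
Proof.
move=> UF cA FA; have [x [Ax cx]] := cA (f @ F) _ FA.
exists x => // B Bx; have [//|FBC] := in_ultra_setVsetC (f @^-1` B) UF.
by have /set0P/eqP := cx (~` B) B FBC Bx; rewrite setICl.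
Qed.

Lemma ultra_compact_cvg_fam (T I : Type) (F : set_system T) (X : topologicalType)
    (f : I -> T -> X) (A : set X) :
  UltraFilter F -> compact A -> (forall i, \forall t \near F, A (f i t)) ->
  exists x : I -> X, forall i, A (x i) /\ f i @ F --> x i.
Proof.
move=> UF cA FA; have /choice [x xP] : forall i, exists x, A x /\ f i @ F --> x.
  by move=> i; have [x Ax fx] := ultra_compact_cvg UF cA (FA i); exists x.
by exists x.
Qed.

Lemma ptws_eval_continuous (I : Type) (T : topologicalType) (i : I) :
  continuous (fun f : {ptws I -> T} => f i).
Proof.
move=> f; have /cvg_sup/(_ i)/cvg_image : f --> f by apply: cvg_id.
move=> h; apply: cvg_trans (h _) => {h}.
  by move=> Q /= [W nbdW <-]; apply: filterS nbdW; exact: preimage_image.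
by rewrite eqEsubset; split => y //; exists (fun=> y).
Qed.

Section CompactlySupported.

Variables (R : realType) (Y : topologicalType).

Lemma integ_continuous (f : Cc R Y) :
  continuous (fun w : Meas R Y => integ w (sval f)).
Proof.
move=> w; exact: continuous_comp (@initial_continuous _ _ (@meas_emb R Y) w)
  (@ptws_eval_continuous (Cc R Y) R f (meas_emb w)).
Qed.

Hypotheses (hY : hausdorff_space Y) (lcY : locally_compact [set: Y]).

Lemma Cc_bump (O : set Y) (y : Y) : open O -> O y ->
  exists f : Cc R Y, [/\ sval f y = 1, forall x, 0 <= sval f x <= 1
                       & forall x, sval f x != 0 -> O x].
Proof.
move=> oO Oy; have [V] := @lcY y I; rewrite withinET => Vy [cV clV].
set B := ~` (O `&` V°).
have clB : closed B by rewrite closedC; apply: openI => //; exact: open_interior.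
have nBy : ~ B y by apply; split.
have sep := @locally_compact_completely_regular Y R lcY hY y B clB nBy.
pose u := Urysohn (R:=R) [set y] B.
have uB x : 1 - u x != 0 -> (O `&` V°) x.
  apply: contraNP => nBx; suff -> : u x = 1 by rewrite subrr.
  by apply: (Urysohn_sub1 sep); exists x.
have fc : continuous (fun x => 1 - u x).
  by move=> x; apply: cvgB; [exact: cvg_cst | exact: Urysohn_continuous].
have fcc : compact (closure [set x | 1 - u x != 0]).
  apply: subclosed_compact cV _; first exact: closed_closure.
  rewrite [X in _ `<=` X](closure_id V).1 //.
  by apply: closureS => x /uB [_ /interior_subset].
exists (exist _ (fun x => 1 - u x) (conj fc fcc)); split => /= [|x|x /uB []//].
  have -> : u y = 0 by apply: (Urysohn_sub0 sep); exists y.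
  by rewrite subr0.
have : range u (u x) by exists x.
move/Urysohn_range; rewrite /= in_itv /= => /andP [u0 u1].
by rewrite subr_ge0 u1 /= lerBlDr lerDl.
Qed.

Lemma eq_meas_Cc (w1 w2 : Y -> R) :
  finite_set (supp w1) -> finite_set (supp w2) ->
  (forall f : Cc R Y, integ w1 (sval f) = integ w2 (sval f)) -> w1 = w2.
Proof.
move=> fw1 fw2 eqw; apply/funext => y.
have /finite_set_cover [l ul sl] : finite_set (supp w1 `|` supp w2).
  by rewrite finite_setU.
have sl1 : supp w1 `<=` [set` l] by move=> x wx; apply: sl; left.
have sl2 : supp w2 `<=` [set` l] by move=> x wx; apply: sl; right.
have [yl|nyl] := boolP (y \in l); last first.
  suff out (w : Y -> R) : supp w `<=` [set` l] -> w y = 0.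
    by rewrite (out _ sl1) (out _ sl2).
  by move=> swl; apply: nsupp_eq0 => /swl /=; rewrite (negbTE nyl).
(* A bump at y vanishing at the other points of l evaluates at y every
   measure carried by l. *)
have cl : closed ([set` l] `\ y).
  apply: (accessible_finite_set_closed.1 (hausdorff_accessible hY)).
  exact: sub_finite_set (@subDsetl _ _ _) (finite_seq l).
have [f [fy _ fO]] := Cc_bump (closed_openC cl) (fun h => h.2 erefl).
suff integ_f w : supp w `<=` [set` l] -> integ w (sval f) = w y.
  by rewrite -(integ_f _ sl1) -(integ_f _ sl2).
move=> swl; rewrite (integ_seq _ ul swl) (bigD1_seq y) //= fy mulr1 big1 ?addr0 //.
move=> x xy; have [xl|nxl] := boolP (x \in l).
  suff -> : sval f x = 0 by rewrite mulr0.
  apply/eqP; apply: contraT => fx; exfalso; apply: (fO x fx).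
  by split => //= /eqP; rewrite (negbTE xy).
suff -> : w x = 0 by rewrite mul0r.
by apply: nsupp_eq0 => /swl /=; rewrite (negbTE nxl).
Qed.

Lemma lim_dirac_sum (T : Type) (F : set_system T) (I : finType)
    (m : T -> Meas R Y) (mu : Meas R Y) (a : T -> I -> R) (e : T -> I -> Y)
    (al : I -> R) (z : I -> Y) :
  ProperFilter F -> finite_set (supp mu) -> m @ F --> mu ->
  (\forall t \near F, forall h, integ (m t) h = \sum_i a t i * h (e t i)) ->
  (forall i, a^~ i @ F --> al i) -> (forall i, e^~ i @ F --> z i) ->
  mu = dirac_sum z al.
Proof.
move=> PF fmu m_mu m_atoms a_al e_z.
apply: eq_meas_Cc => // [|f]; first exact: finite_supp_dirac_sum.
rewrite integ_dirac_sum.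
apply: (near_eq_cvg_unique PF (@Rhausdorff R)).
- exact: (continuous_cvg _ (@integ_continuous f mu) m_mu).
- apply: cvg_big => [|i _]; first exact: add_continuous.
  apply: cvgM; first exact: a_al.
  exact: (continuous_cvg _ (proj1 (svalP f) (z i)) (e_z i)).
- by apply: filterS m_atoms => t; apply.
Qed.

End CompactlySupported.

Section Realization.

Variables (R : realType) (Y : topologicalType) (Delta : set (set Y)) (N : nat).
Hypothesis Dsize : forall d, Delta d ->
  exists l : seq Y, (size l <= N)%N /\ d = [set y | y \in l].
Hypothesis Dne : forall d, Delta d -> d !=set0.

Lemma realization_seq (w : Y -> R) : realization Delta w ->
  exists l, [/\ uniq l, (size l <= N)%N, supp w = [set` l] & l != [::]].
Proof.
move=> [_ [Dw _]]; have [l [lN wl]] := Dsize Dw.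
have [y wy] := Dne Dw.
exists (undup l); split.
- exact: undup_uniq.
- exact: leq_trans (size_undup l) lN.
- by rewrite wl; apply/funext => x /=; rewrite mem_undup.
- by apply: contraTneq isT => l0; move: wy; rewrite wl /= -mem_undup l0.
Qed.

Lemma finite_supp_realization (w : Y -> R) : realization Delta w ->
  finite_set (supp w).
Proof. by case/realization_seq => l [_ _ -> _]; exact: finite_seq. Qed.

Lemma realization_atoms (y0 : Y) :
  exists (e : (Y -> R) -> 'I_N -> Y) (a : (Y -> R) -> 'I_N -> R),
  forall w, realization Delta w ->
    [/\ forall i, supp w (e w i), forall i, 0 <= a w i <= 1
      & forall h, integ w h = \sum_i a w i * h (e w i)].
Proof.
suff /choice [ea eaP] : forall w : Y -> R, exists ea : ('I_N -> Y) * ('I_N -> R),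
    realization Delta w -> [/\ forall i, supp w (ea.1 i), forall i, 0 <= ea.2 i <= 1
      & forall h, integ w h = \sum_i ea.2 i * h (ea.1 i)].
  by exists (fun w => (ea w).1), (fun w => (ea w).2).
move=> w; have [rw|nrw] := pselect (realization Delta w); last first.
  by exists ((fun=> y0), (fun=> 0)) => /nrw.
have [l [ul lN wl l0]] := realization_seq rw.
(* Pad to N atoms with weight 0, repeating the first atom so that every atom
   stays in the support. *)
pose x0 := head y0 l.
exists ((fun i : 'I_N => nth x0 l i),
        (fun i : 'I_N => if (i < size l)%N then w (nth x0 l i) else 0)).
move=> _; split => [i|i|h] /=.
- rewrite wl /=; have [/mem_nth -> //|il] := ltnP i (size l).
  by rewrite nth_default // /x0 -nth0 mem_nth // lt0n size_eq0.
- case: ifP => _; last by rewrite lexx ler01.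
  have [w0 [_ w1]] := rw; rewrite w0 /=.
  by apply: prob_weight_le1 w1 => //; exact: finite_supp_realization.
- rewrite (integ_seq _ ul); last by rewrite wl.
  rewrite (big_nth x0) big_mkord.
  rewrite (big_ord_widen N (fun i => w (nth x0 l i) * h (nth x0 l i)) lN).
  by rewrite big_mkcond; apply: eq_bigr => i _; case: ifP; rewrite ?mul0r.
Qed.

Hypothesis Dsub : forall d d', Delta d -> d' `<=` d -> d' !=set0 -> Delta d'.
Hypotheses (DH1 : H1 Delta) (hY : hausdorff_space Y) (lcY : locally_compact [set: Y]).

Lemma realization_supp_near (T : Type) (F : set_system T) (m : T -> Meas R Y)
    (mu : Meas R Y) :
  Filter F -> realization Delta mu -> m @ F --> mu ->
  (\forall t \near F, realization Delta (m t)) ->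
  exists2 C, compact C & \forall t \near F, supp (m t) `<=` C.
Proof.
move=> FF rmu m_mu Fr; have [mu0 [Dmu _]] := rmu.
have [y1 mu_y1] := Dne Dmu.
have [V] := @lcY y1 I; rewrite withinET => Vy1 [cV _].
have [f [fy1 f01 fV]] := Cc_bump R hY lcY (@open_interior _ V) Vy1.
have f0 x : 0 <= sval f x by have /andP[] := f01 x.
have mu_f : 0 < integ mu (sval f).
  apply: integ_gt0 mu_y1 _ => //; last by rewrite fy1.
  exact: finite_supp_realization.
have Fpos : \forall t \near F, 0 < integ (m t) (sval f).
  have m_f := continuous_cvg _ (@integ_continuous R Y f mu) m_mu.
  exact: m_f [set x | 0 < x] (open_nbhs_nbhs (conj (@open_gt _ 0) mu_f)).
exists [set y | exists2 y', V y' & Delta [set y; y']]; first exact: DH1.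
apply: filterS (filterI Fpos Fr) => t [mt_f [_ [Dt _]]] y mt_y.
have [y' mt_y' fy'] := integ_neq0_supp (lt0r_neq0 mt_f).
exists y'; first exact: interior_subset (fV _ fy').
by apply: Dsub Dt _ _; [move=> x [->|->] | exists y; left].
Qed.

End Realization.

Section ProperLimit.

Variables (R : realType) (G Y : topologicalType) (s : G -> G) (rho : Y -> G).
Variables (act : G -> Y -> Y) (Delta : set (set Y)) (N : nat).
Hypotheses (hG : hausdorff_space G) (s_cont : continuous s).
Hypotheses (hY : hausdorff_space Y) (lcY : locally_compact [set: Y]).
Hypothesis rho_cont : continuous rho.
Hypothesis act_cont :
  {within [set p : G * Y | s p.1 = rho p.2], continuous (fun p => act p.1 p.2)}.

Lemma composable_limit (T : Type) (F : set_system T) (g : T -> G) (y : T -> Y)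
    (g0 : G) (y0 : Y) :
  ProperFilter F -> g @ F --> g0 -> y @ F --> y0 ->
  (\forall t \near F, s (g t) = rho (y t)) ->
  s g0 = rho y0 /\ (fun t => act (g t) (y t)) @ F --> act g0 y0.
Proof.
move=> PF g_g0 y_y0 gy; have g0y0 : s g0 = rho y0.
  apply: (near_eq_cvg_unique (f := s \o g) (g := rho \o y) PF hG _ _ gy).
  - exact: (continuous_cvg _ (@s_cont g0) g_g0).
  - exact: (continuous_cvg _ (@rho_cont y0) y_y0).
split => //.
apply: (cvg_within_comp (m := fun t => (g t, y t)) (x := (g0, y0)) _ act_cont).
- exact: g0y0.
- exact: cvg_pair g_g0 y_y0.
- exact: gy.
Qed.

Hypothesis Yproper : proper_action_on [set: Y] (fun g y => s g = rho y) act.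
Hypothesis Dsize : forall d, Delta d ->
  exists l : seq Y, (size l <= N)%N /\ d = [set y | y \in l].
Hypothesis Dne : forall d, Delta d -> d !=set0.
Hypothesis Dsub : forall d d', Delta d -> d' `<=` d -> d' !=set0 -> Delta d'.
Hypothesis DH1 : H1 Delta.

Variables (U : set_system (G * Meas R Y)) (mu nu : Meas R Y).
Hypothesis UU : UltraFilter U.
Hypotheses (rmu : realization Delta mu) (rnu : realization Delta nu).
Hypothesis mu_lim : (fun p => p.2) @ U --> mu.
Hypothesis nu_lim : (fun p => push act p.1 p.2) @ U --> nu.
Hypothesis U_comp : \forall p \near U,
  [/\ realization Delta p.2, meas_comp s rho p.1 p.2
    & realization Delta (push act p.1 p.2)].

Let PU : ProperFilter U := @ultra_proper _ _ UU.

Lemma ultra_supp_compact : exists2 C, compact C & \forall p \near U, supp p.2 `<=` C.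
Proof.
apply: (realization_supp_near Dsize Dne Dsub DH1 hY lcY _ rmu mu_lim).
by apply: filterS U_comp => p [].
Qed.

Lemma ultra_fst_cvg : exists g0 : G, (fun p => p.1) @ U --> g0.
Proof.
have [C1 cC1 UC1] := ultra_supp_compact.
have [C2 cC2 UC2] : exists2 C, compact C &
    \forall p \near U, supp (push act p.1 p.2) `<=` C.
  apply: (realization_supp_near Dsize Dne Dsub DH1 hY lcY _ rnu nu_lim).
  by apply: filterS U_comp => p [].
pose Q := [set p : G * Y |
  [set: Y] p.2 /\ s p.1 = rho p.2 /\ (C2 `*` C1) (act p.1 p.2, p.2)].
have cQ : compact Q := Yproper (fun _ _ => conj I I) (compact_setX cC2 cC1).
have fst_cont : continuous (@fst G Y) by move=> p; exact: cvg_fst.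
have cA := continuous_compact (continuous_subspaceT fst_cont) cQ.
suff /(ultra_compact_cvg UU cA) [g0 _ g0_lim] : \forall p \near U, (fst @` Q) p.1.
  by exists g0.
apply: filterS (filterI U_comp (filterI UC1 UC2)) => -[g w] /= [[rw gw _] [C1w C2w]].
have [y wy] := Dne rw.2.1; exists (g, y) => //; split => //; split; first exact: gw.
split => /=; last exact: C1w.
apply/C2w/supp_push_act => //; last exact: rw.1.
exact: finite_supp_realization Dsize Dne _ rw.
Qed.

Lemma ultra_limit_point :
  exists g0 : G, [/\ U --> (g0, mu), meas_comp s rho g0 mu & nu = push act g0 mu].
Proof.
have [g0 g0_lim] := ultra_fst_cvg.
have [C1 cC1 UC1] := ultra_supp_compact.
have [y0 _] := Dne rmu.2.1.
have [e [a eaP]] := realization_atoms R Dsize Dne y0.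
have Ue : \forall p \near U,
    [/\ forall i, supp p.2 (e p.2 i), forall i, 0 <= a p.2 i <= 1
    & forall h, integ p.2 h = \sum_i a p.2 i * h (e p.2 i)].
  by apply: filterS U_comp => p [/eaP].
have e_C1 i : \forall p \near U, C1 (e p.2 i).
  by apply: filterS (filterI Ue UC1) => p [[p_e _ _] p_C1]; exact: p_C1 _ (p_e i).
have [z zP] := ultra_compact_cvg_fam (f := fun i p => e p.2 i) UU cC1 e_C1.
have a01 i : \forall p \near U, `[0, 1]%classic (a p.2 i).
  by apply: filterS Ue => p [_ p_a _]; rewrite /= in_itv; exact: p_a.
have [al alP] :=
  ultra_compact_cvg_fam (f := fun i p => a p.2 i) UU (@segment_compact R 0 1) a01.
have e_comp i : \forall p \near U, s p.1 = rho (e p.2 i).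
  apply: filterS (filterI U_comp Ue) => p [[_ p_comp _] [p_e _ _]].
  exact: p_comp _ (p_e i).
have lim_z i := composable_limit PU g0_lim (zP i).2 (e_comp i).
have mu_eq : mu = dirac_sum z al.
  apply: (lim_dirac_sum hY lcY _ (finite_supp_realization Dsize Dne rmu) mu_lim _
    (fun i => (alP i).2) (fun i => (zP i).2)).
  by apply: filterS Ue => p [].
have nu_eq : nu = dirac_sum (act g0 \o z) al.
  apply: (lim_dirac_sum hY lcY _ (finite_supp_realization Dsize Dne rnu) nu_lim _
    (fun i => (alP i).2) (fun i => (lim_z i).2)).
  apply: filterS (filterI U_comp Ue) => p [[rp _ _] [_ _ p_int]] h.
  by rewrite integ_push ?p_int //; exact: finite_supp_realization Dsize Dne _ rp.
exists g0; split.
- exact: cvg_fst_snd g0_lim mu_lim.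
- move=> y; have -> : supp mu = supp (dirac_sum z al) by rewrite mu_eq.
  by move=> /supp_dirac_sum [i _ <-]; exact: (lim_z i).1.
- by rewrite nu_eq mu_eq push_dirac_sum.
Qed.

End ProperLimit.

Theorem proposition3p24 (R : realType) (G : topologicalType) (G0 : set G)
    (r s : G -> G) (mul : G -> G -> G) (inv : G -> G)
    (Y : topologicalType) (rho : Y -> G) (act : G -> Y -> Y)
    (Delta : set (set Y)) :
  etale_groupoid G0 r s mul inv ->
  etale_G_space G0 r s mul rho act ->
  G_simplicial_complex s rho act Delta ->
  proper_action_on [set: Y] (fun g y => s g = rho y) act ->
  H1 Delta -> H2 Delta ->
  proper_action_on (realization (R:=R) Delta) (meas_comp s rho) (push act).
Proof.
move=> [[_ [_ [_ [_ [_ [_ [_ [s_cont _]]]]]]]] [hG _]].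
move=> [hY [lcY [[rho_cont _] [_ [_ [_ act_cont]]]]]].
move=> [[N Dsize] [Dne [_ [Dsub _]]]] Yproper DH1 _ K KD cK.
rewrite compact_ultra => U UU UP.
have PU := @ultra_proper _ _ UU.
have [[nu mu] K_nu_mu U_lim] :
    exists2 q, K q & (fun p => (push act p.1 p.2, p.2)) @ U --> q.
  by apply: ultra_compact_cvg UU cK _; apply: filterS UP => p [_ []].
have [rnu rmu] := KD _ K_nu_mu.
have U_comp : \forall p \near U, [/\ realization Delta p.2, meas_comp s rho p.1 p.2
    & realization Delta (push act p.1 p.2)].
  by apply: filterS UP => p [rp [cp /KD[]]].
have [g0 [g0_lim g0_mu nu_eq]] :=
  ultra_limit_point hG s_cont hY lcY rho_cont act_cont Yproper Dsize Dne Dsub DH1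
    UU rmu rnu (cvg_comp _ _ U_lim cvg_snd) (cvg_comp _ _ U_lim cvg_fst) U_comp.
by exists (g0, mu); split => //; split => //=; rewrite -nu_eq.
Qed.
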